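(* Let $\mathcal{F}$ be a set of functions satisfying premise (P) below, and let $F\in\mathcal{F}$ have even arity. Then either every closed $\{\neq_2\}\mid\{F\}$-network (with any positive number of $F$-side vertices) has value $0$, or every such network has nonzero value.
   Context: $\neq_2(x,y)=1$ if $x\ne y$ and $0$ otherwise. $\mathrm{Holant}_{\neq}(\mathcal{F})$ denotes $\#\{\neq_2\}\mid\mathcal{F}$: inputs are finite bipartite multigraphs where every vertex on one side has degree 2 and carries $\neq_2$, and every vertex $v$ on the other (''$F$-side'') carries some $F_v\in\mathcal{F}$ of arity $\deg(v)$ with an ordering of incident edges; value $\sum_{\sigma:E\to\{0,1\}}\prod(\text{vertex functions})$. Gadgets: such networks with dangling edges at $F$-side vertices; realizable functions are functions of gadgets. Premise (P): every realizable binary function is $\lambda\cdot\neq_2$ ($\lambda\in\mathbb{C}$), and every realizable arity-4 function is $\lambda\,\neq_2(x_{\tau(1)},x_{\tau(2)})\neq_2(x_{\tau(3)},x_{\tau(4)})$ for some $\lambda\in\mathbb{C}$ and permutation $\tau$ of $\{1,2,3,4\}$. *)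

(* complex numbers C = R[i] for an arbitrary realType R
   (every realType is isomorphic to the reals, so R[i] is the field of
   complex numbers). *)
From HB Require Import structures.
From mathcomp Require Import all_boot all_order all_algebra.
From mathcomp Require Import fingroup perm reals.
From mathcomp Require Export complex.
Set Implicit Arguments.
Unset Strict Implicit.
Unset Printing Implicit Defensive.
Import Order.TTheory GRing.Theory Num.Theory.
Local Open Scope ring_scope.

Section Holant.
Variable C : numClosedFieldType.

Definition sigfun (n : nat) := {ffun {ffun 'I_n -> bool} -> C}.
Definition signature := {n : nat & sigfun n}.

Definition neq2v (a b : bool) : C := if a != b then 1 else 0.
Definition neq2 : sigfun 2 :=
  [ffun x : {ffun 'I_2 -> bool} => neq2v (x ord0) (x (Ordinal (isT : 1 < 2)%N))].

(* A gadget (= network for #{neq_2} | F with k dangling edges).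
   - F-side vertices: 'I_nV; vertex v has arity (degree) ar v and carries
     the function fn v, its incident edges being ordered as 'I_(ar v).
   - The edges of the graph are exactly the "ports" (v, i), i < ar v.
   - There are nD degree-2 vertices carrying neq_2; the d-th one is
     adjacent to the two edges (ends d).1 and (ends d).2.
   - Each edge is adjacent to at most one neq_2 vertex, and at most once
     (the 2*nD ports listed by ends are pairwise distinct).
   - The edges adjacent to no neq_2 vertex are the dangling edges; they are
     listed (ordered) by ext : 'I_k -> port, bijectively. *)
Definition port (nV : nat) (ar : 'I_nV -> nat) := {v : 'I_nV & 'I_(ar v)}.

Record gadget (k : nat) := Gadget {
  nV : nat;
  ar : 'I_nV -> nat;
  fn : forall v : 'I_nV, sigfun (ar v);
  nD : nat;
  ends : 'I_nD -> port ar * port ar;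
  ext : 'I_k -> port ar;
  ends_ne : forall d, (ends d).1 != (ends d).2;
  ends_inj1 : forall d d', (ends d).1 = (ends d').1 -> d = d';
  ends_inj2 : forall d d', (ends d).2 = (ends d').2 -> d = d';
  ends_disj : forall d d', (ends d).1 != (ends d').2;
  ext_inj : injective ext;
  ext_dangling : forall p : port ar,
    (exists i, ext i = p) <-> (forall d, (ends d).1 != p /\ (ends d).2 != p)
}.

Arguments nV {k} g.
Arguments ar {k} g v.
Arguments fn {k} g v.
Arguments nD {k} g.
Arguments ends {k} g d.
Arguments ext {k} g i.

Definition gval k (g : gadget k) (x : {ffun 'I_k -> bool}) : C :=
  \sum_(s : {ffun port (ar g) -> bool} | [forall i, s (ext g i) == x i])
     ((\prod_(v : 'I_(nV g)) fn g v [ffun j => s (Tagged (fun v => 'I_(ar g v)) j)]) *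
      \prod_(d : 'I_(nD g)) neq2v (s (ends g d).1) (s (ends g d).2)).

Definition over k (calF : signature -> Prop) (g : gadget k) :=
  forall v, calF (existT _ (ar g v) (fn g v)).

Definition realizable (calF : signature -> Prop) k (f : sigfun k) :=
  exists g : gadget k, over calF g /\ forall x, gval g x = f x.

Definition premiseP (calF : signature -> Prop) :=
  (forall f : sigfun 2, realizable calF f ->
     exists lam : C, forall x, f x = lam * neq2 x) /\
  (forall f : sigfun 4, realizable calF f ->
     exists (lam : C) (tau : {perm 'I_4}), forall x : {ffun 'I_4 -> bool},
       f x = lam * neq2v (x (tau (inord 0))) (x (tau (inord 1)))
                 * neq2v (x (tau (inord 2))) (x (tau (inord 3)))).

Definition closed_value (g : gadget 0) : C := gval g [ffun i => false].

Definition F_network (F : signature) (g : gadget 0) :=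
  (0 < nV g)%N /\ forall v, existT _ (ar g v) (fn g v) = F.

End Holant.

(* Cutting two neq2-vertices out of a closed {neq2}|{F}-network leaves an arity-4 gadget,
   which by premise (P) is lam * neq2(x_a, x_b) * neq2(x_c, x_d) for a perfect matching
   {ab, cd} of its four dangling edges.  Reconnecting these edges by two neq2-vertices along
   a perfect matching M gives lam times the number of assignments properly 2-colouring both
   {ab, cd} and M, and that number is positive: two perfect matchings of four points always
   have a common proper 2-colouring.  Hence exchanging the partners of two neq2-vertices
   does not change whether the value vanishes, and reversing a neq2-vertex does not change
   the value at all.  When F has even arity, such moves turn any network into one where each
   neq2-vertex joins the partner ports 2i and 2i+1 of a single F-vertex; its value is
   Phi ^ n, where Phi is the value of F with all these self-loops and n > 0 is the number of
   F-vertices.  So either Phi = 0 and every network has value 0, or none does. *)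

From Pilot Require Import Defs.
From HB Require Import structures.
From mathcomp Require Import all_boot all_order all_algebra.
From mathcomp Require Import reals complex fingroup perm zify.
Import GRing.Theory Num.Theory.
Local Open Scope ring_scope.
Set Implicit Arguments.
Unset Strict Implicit.
Unset Printing Implicit Defensive.

#[local] Arguments ar {C k} g v.
#[local] Arguments fn {C k} g v.
#[local] Arguments ends {C k} g _.

Lemma bigA_distr_tagged (R : comPzSemiRingType) (I : finType) (J_ : I -> finType)
    (T : finType) (G : forall i, {ffun J_ i -> T} -> R) :
  \sum_(s : {ffun {i : I & J_ i} -> T}) \prod_i G i [ffun j => s (Tagged J_ j)] =
  \prod_i \sum_(t : {ffun J_ i -> T}) G i t.
Proof.
pose T_ i := {ffun J_ i -> T}.
pose glue (t : fprod T_) := [ffun p : {i : I & J_ i} => t (tag p) (tagged p)].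
pose split (s : {ffun {i : I & J_ i} -> T}) :=
  fprod_of_fun (fun i => [ffun j => s (Tagged J_ j)] : T_ i).
have glueK : cancel glue split.
  by move=> t; apply/fprodP => i; rewrite fprodE; apply/ffunP => j; rewrite !ffunE.
have splitK : cancel split glue.
  by move=> s; apply/ffunP => -[i j]; rewrite !ffunE /= fprodE ffunE.
pose P_ i := [ffun t : T_ i => G i t].
rewrite (reindex glue); last by apply: onW_bij; exists split.
transitivity (\sum_(t : fprod T_ | predT (fprod_fun t)) \prod_i P_ i (t i)).
  apply: eq_bigr => t _; apply: eq_bigr => i _; rewrite ffunE; congr (G i _).
  by apply/ffunP => j; rewrite !ffunE.
have tagE i : \sum_(t : T_ i) G i t = \sum_(j in tagged_with T_ i) untag 0 (P_ i) j.
  transitivity (\sum_(t : T_ i) P_ i t); first by apply: eq_bigr => t _; rewrite ffunE.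
  exact: (big_tag (fun i t => P_ i t)).
rewrite big_fprod_dep (eq_bigr _ (fun i _ => tagE i)) bigA_distr_big_dep.
by apply: eq_bigl => f; rewrite andbT.
Qed.

Lemma tperm_inj_map (T T' : finType) (f : T -> T') (x y z : T) :
  injective f -> tperm (f x) (f y) (f z) = f (tperm x y z).
Proof.
by move=> f_inj; rewrite !permE /= !(inj_eq f_inj); case: (z =P y) => _; case: (z =P x).
Qed.

Lemma prodr_bool (R : comPzSemiRingType) (I : finType) (b : pred I) :
  \prod_i ((b i)%:R : R) = [forall i, b i]%:R.
Proof.
have [b_all|/forallPn[i not_bi]] := boolP [forall i, b i].
  by rewrite big1 // => i _; rewrite (forallP b_all).
by rewrite (bigD1 i) //= (negbTE not_bi) mul0r.
Qed.

(* Ports 2i and 2i+1 are partners; when n is odd, the last port is its own partner. *)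
Definition partner n (j : 'I_n) : 'I_n := insubd j (if odd j then j.-1 else j.+1).

Section EvenArity.
Variables (n : nat) (n_even : ~~ odd n).

Lemma val_partner (j : 'I_n) : (partner j : nat) = if odd j then j.-1 else j.+1.
Proof.
have lt_jn := ltn_ord j; rewrite val_insubd.
case oj: (odd j); first by rewrite (leq_ltn_trans (leq_pred _) lt_jn).
suff -> : (j.+1 < n)%N by [].
by rewrite ltn_neqAle lt_jn andbT; apply: contraNneq n_even => <-; rewrite /= oj.
Qed.

Lemma partnerK : involutive (@partner n).
Proof.
move=> j; apply: ord_inj; rewrite !val_partner.
by case: (nat_of_ord j) => [|k] //=; case odd_k: (odd k) => /=; rewrite ?odd_k.
Qed.

Lemma partner_neq (j : 'I_n) : partner j != j.
Proof.
apply/eqP => /(congr1 (@nat_of_ord n)); rewrite val_partner.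
by case: (nat_of_ord j) => [|k] /=; last case: (odd k) => /=; lia.
Qed.

End EvenArity.

Definition port_partner nV (a : 'I_nV -> nat) (p : port a) : port a :=
  Tagged (fun v => 'I_(a v)) (partner (tagged p)).

Section PortPartner.
Variables (nV : nat) (a : 'I_nV -> nat) (a_even : forall v, ~~ odd (a v)).

Lemma port_partnerK : involutive (@port_partner nV a).
Proof. by move=> [v j]; rewrite /port_partner /= partnerK. Qed.

Lemma port_partner_neq (p : port a) : port_partner p != p.
Proof.
apply/eqP => /(congr1 (fun q : port a => nat_of_ord (tagged q))) /=.
by case: p => v j /= /ord_inj/eqP; rewrite (negbTE (partner_neq (a_even v) j)).
Qed.

End PortPartner.

Definition respects (a b c d : 'I_4) (x : 'I_4 -> bool) := (x a != x b) && (x c != x d).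

(* Up to complement, the colourings of four points with two points of each colour.  Each
   perfect matching is properly coloured by exactly two of them, so any two matchings share one. *)
Definition balanced_colourings : seq ('I_4 -> bool) :=
  [:: fun i : 'I_4 => odd i; fun i : 'I_4 => (i == 1 :> nat) || (i == 2 :> nat);
      fun i : 'I_4 => (1 < i)%N].

Lemma count_respects (a b c d : 'I_4) :
  uniq [:: a; b; c; d] -> count (respects a b c d) balanced_colourings = 2%N.
Proof.
by case: a b c d => [[|[|[|[|?]]]] ?] [[|[|[|[|?]]]] ?] [[|[|[|[|?]]]] ?] [[|[|[|[|?]]]] ?].
Qed.

Lemma common_respecting_colouring (a b c d a' b' c' d' : 'I_4) :
  uniq [:: a; b; c; d] -> uniq [:: a'; b'; c'; d'] ->
  exists x : 'I_4 -> bool, respects a b c d x && respects a' b' c' d' x.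
Proof.
move=> abcd_uniq abcd'_uniq.
have : has (predI (respects a b c d) (respects a' b' c' d')) balanced_colourings.
  have := count_predUI (respects a b c d) (respects a' b' c' d') balanced_colourings.
  rewrite !count_respects // has_count.
  have := count_size (predU (respects a b c d) (respects a' b' c' d')) balanced_colourings.
  by rewrite /=; lia.
by case/(has_nthP xpred0) => i _ resp_i; exists (nth xpred0 balanced_colourings i).
Qed.

Section Holant.
Variable C : numClosedFieldType.

Definition selfloop_value (S : signature C) : C :=
  \sum_(t : {ffun 'I_(projT1 S) -> bool} | [forall j, t j != t (partner j)]) projT2 S t.

Lemma selfloop_valueE (S : signature C) :
  selfloop_value S = \sum_t projT2 S t * [forall j, t j != t (partner j)]%:R.
Proof.
rewrite /selfloop_value big_mkcond.
by apply: eq_bigr => t _; case: ifP; rewrite ?mulr1 ?mulr0.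
Qed.

Section HalfEdges.
Variables (k : nat) (g : gadget C k).

Definition endpoint (h : 'I_(nD g) + 'I_(nD g)) : port (ar g) :=
  match h with inl d => (ends g d).1 | inr d => (ends g d).2 end.

Lemma endpoint_inj : injective endpoint.
Proof.
move=> [d|d] [d'|d'] /= E.
- by rewrite (ends_inj1 E).
- by move: (ends_disj d d'); rewrite E eqxx.
- by move: (ends_disj d' d); rewrite E eqxx.
- by rewrite (ends_inj2 E).
Qed.

Definition vertex_weight (s : {ffun port (ar g) -> bool}) : C :=
  \prod_v fn g v [ffun j => s (Tagged (fun v => 'I_(ar g v)) j)].

Definition edge_weight (s : {ffun port (ar g) -> bool}) : C :=
  \prod_d neq2v C (s (ends g d).1) (s (ends g d).2).

End HalfEdges.

Arguments endpoint {k} g h.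
Arguments vertex_weight {k} g s.
Arguments edge_weight {k} g s.

Lemma endpoint_surj (g : gadget C 0) p : exists h, endpoint g h = p.
Proof.
have [h /eqP|miss] := pickP [pred h | endpoint g h == p]; first by exists h.
have [[]] // : exists i : 'I_0, ext g i = p.
by apply/ext_dangling => d; split; apply/negbT; [exact: (miss (inl d)) | exact: (miss (inr d))].
Qed.

Lemma closed_valueE (g : gadget C 0) :
  closed_value g = \sum_s vertex_weight g s * edge_weight g s.
Proof. by apply: eq_bigl => s; apply/forallP => -[]. Qed.

Lemma closed_dangling nV (a : 'I_nV -> nat) nD (e : 'I_nD -> port a * port a)
    (x : 'I_0 -> port a) :
  (forall p, exists d, (e d).1 = p \/ (e d).2 = p) ->
  forall p, (exists i, x i = p) <-> (forall d, (e d).1 != p /\ (e d).2 != p).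
Proof.
move=> cover p; split=> [[[]]|not_end] //.
by have [d [E|E]] := cover p; have := not_end d; rewrite E eqxx => -[].
Qed.

(* In a closed gadget every port is the endpoint of exactly one half-edge, so any permutation
   of the half-edges rewires the neq2-vertices into a closed network on the same F-vertices. *)
Section Rewire.
Variables (g : gadget C 0) (sigma : {perm 'I_(nD g) + 'I_(nD g)}).

Let endpoint_sigma_inj : injective (endpoint g \o sigma).
Proof. exact: inj_comp (@endpoint_inj _ g) (@perm_inj _ sigma). Qed.

Definition rewired_ends d := (endpoint g (sigma (inl d)), endpoint g (sigma (inr d))).

Fact rewired_ends_disj d d' : (rewired_ends d).1 != (rewired_ends d').2.
Proof. by apply/eqP => /endpoint_sigma_inj. Qed.

Fact rewired_ends_inj1 d d' : (rewired_ends d).1 = (rewired_ends d').1 -> d = d'.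
Proof. by move/endpoint_sigma_inj => [ ]. Qed.

Fact rewired_ends_inj2 d d' : (rewired_ends d).2 = (rewired_ends d').2 -> d = d'.
Proof. by move/endpoint_sigma_inj => [ ]. Qed.

Fact rewired_ends_cover p : exists d, (rewired_ends d).1 = p \/ (rewired_ends d).2 = p.
Proof.
have [h <-] := endpoint_surj p.
by case E: ((sigma^-1)%g h) => [d|d]; exists d; [left|right]; rewrite /= -E permKV.
Qed.

Definition rewire : gadget C 0 :=
  @Gadget C 0 (nV g) (ar g) (fn g) (nD g) rewired_ends (ext g)
    (fun d => rewired_ends_disj d d) rewired_ends_inj1 rewired_ends_inj2
    rewired_ends_disj (@ext_inj _ _ g) (closed_dangling (ext g) rewired_ends_cover).

End Rewire.

Lemma neq2vE (a b : bool) : neq2v C a b = (a != b)%:R.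
Proof. by rewrite /neq2v; case: (a != b). Qed.

Lemma neq2vC (a b : bool) : neq2v C a b = neq2v C b a.
Proof. by rewrite /neq2v eq_sym. Qed.

Definition swap_partners (g : gadget C 0) (d1 d2 : 'I_(nD g)) :=
  rewire (tperm (inr d1) (inr d2)).

Definition reverse (g : gadget C 0) (d0 : 'I_(nD g)) := rewire (tperm (inl d0) (inr d0)).

Arguments swap_partners : clear implicits.
Arguments reverse : clear implicits.

Lemma ends_swap_partners (g : gadget C 0) d1 d2 d :
  ends (swap_partners g d1 d2) d = ((ends g d).1, (ends g (tperm d1 d2 d)).2).
Proof.
by rewrite /= /rewired_ends (tperm_inj_map _ _ _ inr_inj) [tperm _ _ (inl _)]tpermD.
Qed.

Lemma ends_reverse (g : gadget C 0) d0 d :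
  ends (reverse g d0) d = if d == d0 then ((ends g d).2, (ends g d).1) else ends g d.
Proof.
rewrite /= /rewired_ends !permE /= !(inj_eq inl_inj) !(inj_eq inr_inj).
by case: eqP => [->|] //=; case: (ends g d).
Qed.

Lemma closed_value_reverse (g : gadget C 0) d0 : closed_value (reverse g d0) = closed_value g.
Proof.
rewrite !closed_valueE; apply: eq_bigr => s _; congr (_ * _).
by apply: eq_bigr => d _; rewrite ends_reverse; case: eqP => // _; apply: neq2vC.
Qed.

Definition canonical (g : gadget C 0) := forall d, (ends g d).2 = port_partner (ends g d).1.

Section Canonical.
Variables (g : gadget C 0) (ar_even : forall v, ~~ odd (ar g v)) (can_g : canonical g).

Lemma edge_weight_canonical s :
  edge_weight g s = [forall p, s p != s (port_partner p)]%:R.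
Proof.
rewrite /edge_weight (eq_bigr _ (fun d _ => neq2vE _ _)) prodr_bool.
congr (nat_of_bool _)%:R; apply/forallP/forallP => [ok p|ok d]; last by rewrite can_g.
have [[d|d] <-] := endpoint_surj p; have := ok d; rewrite /= can_g //.
by rewrite port_partnerK // eq_sym.
Qed.

Lemma closed_value_canonical :
  closed_value g = \prod_v selfloop_value (existT _ (ar g v) (fn g v)).
Proof.
pose paired v (t : {ffun 'I_(ar g v) -> bool}) := [forall j, t j != t (partner j)].
have edge_weightE s : edge_weight g s =
    \prod_v (paired v [ffun j => s (Tagged (fun v => 'I_(ar g v)) j)])%:R.
  rewrite edge_weight_canonical prodr_bool; congr (nat_of_bool _)%:R.
  apply/forallP/forallP => [ok v|ok [v j]]; first by apply/forallP => j; rewrite !ffunE.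
  by have /forallP/(_ j) := ok v; rewrite !ffunE.
rewrite closed_valueE (eq_bigr _ (fun v _ => selfloop_valueE _)) /=.
rewrite -(bigA_distr_tagged (fun v t => fn g v t * (paired v t)%:R)).
by apply: eq_bigr => s _; rewrite edge_weightE -big_split.
Qed.

End Canonical.

Definition noncanonical (g : gadget C 0) :=
  [set d | (ends g d).2 != port_partner (ends g d).1].

Lemma noncanonical0 (g : gadget C 0) : noncanonical g = set0 -> canonical g.
Proof. by move=> /setP nc0 d; apply/eqP/negPn; have := nc0 d; rewrite !inE => ->. Qed.

Lemma noncanonical_reverse (g : gadget C 0) d0 :
  d0 \in noncanonical g -> noncanonical (reverse g d0) \subset noncanonical g.
Proof.
rewrite inE => nc0; apply/subsetP => d; rewrite !inE ends_reverse.
by case: (d =P d0) => [->|_] //; rewrite eqxx.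
Qed.

Lemma noncanonical_swap_partners (g : gadget C 0) d1 d2 :
  (forall v, ~~ odd (ar g v)) -> d1 \in noncanonical g ->
  (ends g d2).2 = port_partner (ends g d1).1 ->
  d1 != d2 /\ (#|noncanonical (swap_partners g d1 d2)| < #|noncanonical g|)%N.
Proof.
move=> ar_even; rewrite inE => nc1 end_d2.
have ne12 : d1 != d2 by apply: contraNneq nc1 => E; rewrite {1}E end_d2.
have nc2 : (ends g d2).2 != port_partner (ends g d2).1.
  rewrite end_d2; apply: contra_neq ne12 => /(can_inj (port_partnerK ar_even)).
  exact: ends_inj1.
split=> //; rewrite (cardsD1 d1) inE nc1 add1n ltnS; apply: subset_leq_card.
apply/subsetP => d; rewrite !inE ends_swap_partners /=.
case: (d =P d1) => [->|ne1]; first by rewrite tpermL end_d2 eqxx.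
case: (d =P d2) => [->|ne2]; first by rewrite nc2.
by rewrite tpermD // eq_sym; apply/eqP.
Qed.

Lemma canonical_reachable (Q : gadget C 0 -> Prop) :
  (forall g d1 d2, d1 != d2 -> Q g -> Q (swap_partners g d1 d2)) ->
  (forall g d, Q g -> Q (reverse g d)) ->
  forall g, (forall v, ~~ odd (ar g v)) -> Q g -> exists2 g', Q g' & canonical g'.
Proof.
move=> Qswap Qrev g; move: {2}#|noncanonical g| (leqnn #|noncanonical g|) => n.
elim: n g => [|n IH] g le_n ar_even Qg.
  by exists g => //; apply/noncanonical0/cards0_eq/eqP; rewrite -leqn0.
have [/noncanonical0|[d1 nc1]] := set_0Vmem (noncanonical g); first by exists g.
have [[d2|d2] /= end_d2] := endpoint_surj (port_partner (ends g d1).1); last first.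
  have [ne12 lt_n] := noncanonical_swap_partners ar_even nc1 end_d2.
  apply: (IH (swap_partners g d1 d2)) => //; last exact: Qswap.
  by rewrite -ltnS (leq_trans lt_n le_n).
have ne12 : d1 != d2.
  by apply: contraTneq (port_partner_neq ar_even (ends g d1).1) => E; rewrite -end_d2 E eqxx.
have nc2 : d2 \in noncanonical g.
  rewrite inE end_d2 port_partnerK //; apply/eqP => E.
  by have := ends_disj d1 d2; rewrite -E eqxx.
pose g1 := reverse g d2.
have nc1' : d1 \in noncanonical g1 by move: nc1; rewrite !inE ends_reverse (negbTE ne12).
have end_d2' : (ends g1 d2).2 = port_partner (ends g1 d1).1.
  by rewrite !ends_reverse eqxx (negbTE ne12).
have [_ lt_n] := @noncanonical_swap_partners g1 d1 d2 ar_even nc1' end_d2'.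
apply: (IH (swap_partners g1 d1 d2)) => //; last by apply: Qswap => //; apply: Qrev.
rewrite -ltnS (leq_trans lt_n) // (leq_trans _ le_n) //.
exact: subset_leq_card (noncanonical_reverse nc2).
Qed.

Definition pairing (a b c d : 'I_4) (x : {ffun 'I_4 -> bool}) : C :=
  neq2v C (x a) (x b) * neq2v C (x c) (x d).

Lemma pairingE a b c d x : pairing a b c d x = (respects a b c d x)%:R.
Proof. by rewrite /pairing !neq2vE -natrM mulnb. Qed.

Lemma pairing_inner_neq0 (a b c d a' b' c' d' : 'I_4) :
  uniq [:: a; b; c; d] -> uniq [:: a'; b'; c'; d'] ->
  \sum_x pairing a b c d x * pairing a' b' c' d' x != 0.
Proof.
move=> abcd_uniq abcd'_uniq.
have [y y_resp] := common_respecting_colouring abcd_uniq abcd'_uniq.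
under eq_bigr do rewrite !pairingE -natrM mulnb.
rewrite -natr_sum pnatr_eq0 sum_nat_eq0; apply/forallPn; exists [ffun i => y i].
by move: y_resp; rewrite /respects !ffunE => ->.
Qed.

(* Cutting out the neq2-vertices d1 and d2 := lift d1 d2' leaves a gadget whose dangling
   edges 0, 1, 2, 3 are the first and second edges of d1 and then of d2. *)
Section Cut.
Variables (g : gadget C 0) (d1 : 'I_(nD g)) (d2' : 'I_(nD g).-1).
Let d2 := lift d1 d2'.

Definition cut_keep (i : 'I_(nD g).-1.-1) : 'I_(nD g) := lift d1 (lift d2' i).
Definition cut_halves := [:: inl d1; inr d1; inl d2; inr d2].
Definition cut_ext (i : 'I_4) : port (ar g) := endpoint g (nth (inl d1) cut_halves i).
Definition cut_ends i := ends g (cut_keep i).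

Let ne12 : d1 != d2. Proof. exact: neq_lift. Qed.

Lemma cut_keep_inj : injective cut_keep.
Proof. by move=> i j /lift_inj /lift_inj. Qed.

Lemma cut_keep_neq i : (cut_keep i != d1) && (cut_keep i != d2).
Proof. by rewrite eq_sym neq_lift (inj_eq (@lift_inj _ d1)) eq_sym neq_lift. Qed.

Lemma cut_keep_surj d : d != d1 -> d != d2 -> exists i, cut_keep i = d.
Proof.
move=> ne1 ne2; case: (unliftP d1 d) => [j Ej|E]; last by rewrite E eqxx in ne1.
case: (unliftP d2' j) => [i Ei|E]; first by exists i; rewrite /cut_keep -Ei -Ej.
by rewrite Ej E eqxx in ne2.
Qed.

Lemma uniq_cut_halves : uniq cut_halves.
Proof. by rewrite /= !inE !(inj_eq inl_inj) !(inj_eq inr_inj) (negbTE ne12). Qed.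

Fact cut_ext_inj : injective cut_ext.
Proof.
move=> i j /endpoint_inj /eqP.
by rewrite nth_uniq ?uniq_cut_halves ?ltn_ord // => /eqP /ord_inj.
Qed.

Fact cut_dangling p :
  (exists i, cut_ext i = p) <-> (forall i, (cut_ends i).1 != p /\ (cut_ends i).2 != p).
Proof.
have [h <-] := endpoint_surj p.
have -> : (exists i, cut_ext i = endpoint g h) <-> h \in cut_halves.
  split=> [[i /endpoint_inj <-]|h_in]; first by rewrite mem_nth.
  have lt_h4 : (index h cut_halves < 4)%N by rewrite -[4%N]/(size cut_halves) index_mem.
  by exists (Ordinal lt_h4); rewrite /cut_ext nth_index.
split=> [h_in i|not_end].
  have /andP[ne1 ne2] := cut_keep_neq i.
  by split; apply/eqP;
    [move/(@endpoint_inj _ g (inl _)) | move/(@endpoint_inj _ g (inr _))] => E;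
    move: h_in; rewrite -E !inE ?(inj_eq inl_inj) ?(inj_eq inr_inj) (negbTE ne1) (negbTE ne2).
case: h not_end => d not_end; rewrite !inE ?(inj_eq inl_inj) ?(inj_eq inr_inj) /=;
  suff : (d == d1) || (d == d2) by case/orP => /eqP ->; rewrite eqxx ?orbT.
all: apply/negPn/negP; rewrite negb_or => /andP[ne1 ne2].
all: have [i keep_i] := cut_keep_surj ne1 ne2.
all: by have [] := not_end i; rewrite /cut_ends keep_i /= eqxx.
Qed.

Definition cut : gadget C 4 :=
  @Gadget C 4 (nV g) (ar g) (fn g) (nD g).-1.-1 cut_ends cut_ext
    (fun i => ends_disj _ _) (fun i j E => cut_keep_inj (ends_inj1 E))
    (fun i j E => cut_keep_inj (ends_inj2 E)) (fun i j => ends_disj _ _)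
    cut_ext_inj cut_dangling.

Definition cut_restrict (s : {ffun port (ar g) -> bool}) : {ffun 'I_4 -> bool} :=
  [ffun i => s (cut_ext i)].

Definition cut_edge_weight (s : {ffun port (ar g) -> bool}) : C :=
  \prod_i neq2v C (s (cut_ends i).1) (s (cut_ends i).2).

Lemma sum_gval_cut (W : {ffun 'I_4 -> bool} -> C) :
  \sum_s vertex_weight g s * (cut_edge_weight s * W (cut_restrict s)) =
  \sum_x Defs.gval cut x * W x.
Proof.
rewrite (partition_big cut_restrict xpredT) //=; apply: eq_bigr => x _.
rewrite /Defs.gval big_distrl /=; apply: eq_big => [s|s /eqP <-]; last by rewrite mulrA.
apply/eqP/forallP => [<- i|s_x]; first by rewrite ffunE.
by apply/ffunP => i; rewrite ffunE; apply/eqP/s_x.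
Qed.

Lemma cut_restrict_inord s k :
  (k < 4)%N -> cut_restrict s (inord k) = s (endpoint g (nth (inl d1) cut_halves k)).
Proof. by move=> lt_k4; rewrite ffunE /cut_ext inordK. Qed.

Lemma edge_weight_cut s : edge_weight g s =
  cut_edge_weight s * pairing (inord 0) (inord 1) (inord 2) (inord 3) (cut_restrict s).
Proof.
rewrite /edge_weight (bigD1_ord d1) // (bigD1_ord d2') //= /pairing.
by rewrite !cut_restrict_inord //= mulrA mulrC.
Qed.

Lemma edge_weight_swap_cut s : edge_weight (swap_partners g d1 d2) s =
  cut_edge_weight s * pairing (inord 0) (inord 3) (inord 2) (inord 1) (cut_restrict s).
Proof.
have keep_fixed i : ends (swap_partners g d1 d2) (cut_keep i) = ends g (cut_keep i).
  have /andP[ne1 ne2] := cut_keep_neq i.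
  by rewrite ends_swap_partners tpermD 1?eq_sym //; case: (ends g _).
rewrite /edge_weight (bigD1_ord d1) // (bigD1_ord d2') //.
under eq_bigr do rewrite keep_fixed.
rewrite !ends_swap_partners tpermL tpermR /pairing !cut_restrict_inord //=.
by rewrite mulrA mulrC.
Qed.

Lemma closed_value_cut : closed_value g =
  \sum_x Defs.gval cut x * pairing (inord 0) (inord 1) (inord 2) (inord 3) x.
Proof. by rewrite closed_valueE -sum_gval_cut; apply: eq_bigr => s _; rewrite edge_weight_cut. Qed.

Lemma closed_value_swap_cut : closed_value (swap_partners g d1 d2) =
  \sum_x Defs.gval cut x * pairing (inord 0) (inord 3) (inord 2) (inord 1) x.
Proof.
by rewrite closed_valueE -sum_gval_cut; apply: eq_bigr => s _; rewrite edge_weight_swap_cut.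
Qed.

End Cut.

Lemma inord4_uniq (l : seq nat) :
  uniq l -> all (fun k => k < 4)%N l -> uniq [seq inord k : 'I_4 | k <- l].
Proof.
move=> l_uniq l_lt4; rewrite map_inj_in_uniq // => i j /(allP l_lt4) lt_i4 /(allP l_lt4) lt_j4.
by move/(congr1 (@nat_of_ord 4)); rewrite !inordK.
Qed.

Lemma swap_partners_eq0 (calF : signature C -> Prop) (g : gadget C 0) d1 d2 :
  premiseP calF -> Defs.over calF g -> d1 != d2 ->
  (closed_value (swap_partners g d1 d2) == 0) = (closed_value g == 0).
Proof.
case=> _ realizable4 g_over; case: (unliftP d1 d2) => [d2' ->|->]; last by rewrite eqxx.
move=> _; have cut_realizable : realizable calF [ffun x => Defs.gval (cut d1 d2') x].
  by exists (cut d1 d2'); split=> // x; rewrite ffunE.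
have [lam [tau cutE]] := realizable4 _ cut_realizable.
have tau_uniq : uniq [seq tau i | i <- [seq inord k : 'I_4 | k <- [:: 0; 1; 2; 3]%N]].
  by rewrite (map_inj_uniq (@perm_inj _ tau)) inord4_uniq.
have cut_pairingE W : \sum_x Defs.gval (cut d1 d2') x * W x =
    lam * \sum_x pairing (tau (inord 0)) (tau (inord 1)) (tau (inord 2)) (tau (inord 3)) x
                   * W x.
  by rewrite big_distrr /=; apply: eq_bigr => x _; rewrite mulrA /pairing mulrA -cutE ffunE.
have uniq0123 := @inord4_uniq [:: 0; 1; 2; 3]%N isT isT.
have uniq0321 := @inord4_uniq [:: 0; 3; 2; 1]%N isT isT.
rewrite (@closed_value_swap_cut g d1 d2') (@closed_value_cut g d1 d2') !cut_pairingE !mulf_eq0.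
by rewrite !(negbTE (pairing_inner_neq0 tau_uniq _)).
Qed.

Lemma F_network_value_eq0 (calF : signature C -> Prop) (F : signature C) :
  premiseP calF -> calF F -> ~~ odd (projT1 F) ->
  forall g, F_network F g -> (closed_value g == 0) = (selfloop_value F == 0).
Proof.
move=> P calF_F F_even g g_net.
have ar_even h : F_network F h -> forall v, ~~ odd (ar h v).
  by case=> _ h_F v; move: F_even; rewrite -(h_F v).
have over_F h : F_network F h -> Defs.over calF h by case=> _ h_F v; rewrite h_F.
pose Q h := F_network F h /\ (closed_value h == 0) = (closed_value g == 0).
have [h [h_net <-] h_can] : exists2 h, Q h & canonical h.
  apply: (canonical_reachable (Q := Q)); [ | | exact: ar_even g_net | by split].
  - move=> h d1 d2 ne12 [h_net h_eq0]; split; first exact: h_net.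
    by rewrite (swap_partners_eq0 P (over_F _ h_net)).
  - by move=> h d [h_net h_eq0]; split; [exact: h_net | rewrite closed_value_reverse].
rewrite (closed_value_canonical (ar_even _ h_net) h_can); case: h_net => nV_gt0 h_F.
rewrite (eq_bigr _ (fun v _ => congr1 selfloop_value (h_F v))) prodr_const card_ord.
by rewrite expf_eq0 nV_gt0.
Qed.

End Holant.

Unset Implicit Arguments.

Theorem mainTheorem10 (R : realType) (calF : signature R[i] -> Prop)
  (F : signature R[i]) :
  premiseP calF -> calF F -> ~~ odd (projT1 F) ->
  (forall g : gadget R[i] 0, F_network F g -> closed_value g = 0) \/
  (forall g : gadget R[i] 0, F_network F g -> closed_value g != 0).
Proof.
move=> P calF_F F_even; have value_eq0 := F_network_value_eq0 P calF_F F_even.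
have [loop_eq0|loop_neq0] := boolP (selfloop_value F == 0); [left|right] => g g_net.
  by apply/eqP; rewrite value_eq0.
by rewrite value_eq0.
Qed.
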